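(* Consider the finite-horizon betting problem described in the context, with horizon $H\in\mathbb{N}$ and CRRA utility $u_1(\cdot;\alpha)$, $\alpha\ge 0$ (so $u_1(w;\alpha)=w^\alpha/\alpha$ if $\alpha>0$ and $u_1(w;0)=\ln w$). Then the optimal betting policy $\pi^*_{(\theta,u_1,H)}$, defined by the Bellman recursion of the context, is independent of the wealth variable: for every deck $\mathbf d\in\Omega$, every round index $n<H$ and all $w,w'>0$, $$\pi^*_{(\theta,u_1,H)}(\mathbf d,w,n)=\pi^*_{(\theta,u_1,H)}(\mathbf d,w',n),$$ i.e. the set of maximizing bets $b\in[0,0.5]$ in the Bellman equation at state $(\mathbf d,w,n)$ is the same as at $(\mathbf d,w',n)$.
   Context: A player repeatedly plays rounds of a card game (Blackjack) against a dealer, following a fixed in-round decision rule $\theta$. The composition of the deck before each round (the ''origin deck'') lies in a finite set $\Omega\subset\mathbb{Z}_{\ge0}^{10}$ and the sequence of origin decks $\mathbf d_0,\mathbf d_1,\dots$ (starting from the full deck $\bar{\mathbf d}$) together with the round returns forms a time-homogeneous process: the return $X_\theta^{\mathbf d_n}$ of round $n$ (per unit bet) takes values in $R=\{-2,-1,0,1,1.5,2\}$, and the joint probability $p(\mathbf d',x\mid\mathbf d)=\mathbb P(\mathbf d_{n+1}=\mathbf d',X^{\mathbf d}_\theta=x\mid \mathbf d_n=\mathbf d)$ depends only on $\mathbf d,\mathbf d',x$ (not on $n$ nor on the bets or wealth). Before round $n$ the player, with wealth $W_n$ ($W_0=1$), bets a fraction $\pi_n\in[0,0.5]$ of wealth,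 and $W_{n+1}=(1+\pi_n X_\theta^{\mathbf d_n})W_n$. States are $\psi=(\mathbf d,w,n)$ with $\mathbf d\in\Omega$, $w>0$, $n\in\mathbb Z_{\ge 0}$; a betting policy is a map $\pi$ from states to $[0,0.5]$. The utility is $u_1(w;\alpha)=w^\alpha/\alpha$ for $\alpha>0$ and $\ln w$ for $\alpha=0$. The optimal value and optimal policy for horizon $H$ are defined by $V^*(\mathbf d,w,H)=u_1(w;\alpha)$ and, for $n<H$, $$V^*(\mathbf d,w,n)=\max_{b\in[0,0.5]}\sum_{x\in R}\sum_{\mathbf d'}p(\mathbf d',x\mid\mathbf d)\,V^*(\mathbf d',w(1+bx),n+1),$$ with $\pi^*_{(\theta,u_1,H)}(\mathbf d,w,n)$ the argmax of the same expression. *)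

From HB Require Import structures.
From mathcomp Require Import all_boot all_order all_algebra.
From mathcomp Require Import all_classical all_reals all_analysis.
Set Implicit Arguments. Unset Strict Implicit. Unset Printing Implicit Defensive.
Import Order.TTheory GRing.Theory Num.Theory.
Local Open Scope ring_scope.
Local Open Scope classical_set_scope.

Definition returns (R : realType) : seq R := [:: -2; -1; 0; 1; 3 / 2; 2].

(* CRRA utility u_1(w; alpha): w^alpha/alpha for alpha > 0, ln w for alpha = 0.
   Valued in extended reals so that ln 0 = -oo (wealth can hit 0 when b = 1/2, x = -2). *)
Definition u1 (R : realType) (alpha w : R) : \bar R :=
  if alpha == 0 then (if 0 < w then (ln w)%:E else -oo%E)
  else ((w `^ alpha) / alpha)%:E.

(* p d d' x = P(d_{n+1} = d', X^d = x | d_n = d). *)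
Section Bellman.
Variables (R : realType) (D : finType) (p : D -> D -> R -> R) (alpha : R).

(* Vrem m d w = V^*(d, w, H - m): optimal value with m rounds remaining,
   Qrem m d w b = expected continuation value of betting fraction b. *)
Fixpoint Vrem (m : nat) : D -> R -> \bar R :=
  match m with
  | 0 => fun _ w => u1 alpha w
  | m'.+1 => fun d w =>
      ereal_sup [set (\sum_(d' : D) \sum_(x <- returns R)
                        (p d d' x)%:E * Vrem m' d' (w * (1 + b * x)))%E
                | b in [set b : R | 0 <= b <= 1 / 2]]
  end.

Definition Qrem (m : nat) (d : D) (w b : R) : \bar R :=
  (\sum_(d' : D) \sum_(x <- returns R) (p d d' x)%:E * Vrem m d' (w * (1 + b * x)))%E.

End Bellman.

(* V^*(d, w, n) for horizon H (meaningful for n <= H). *)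
Definition Vstar (R : realType) (D : finType) (p : D -> D -> R -> R) (alpha : R)
  (H : nat) (d : D) (w : R) (n : nat) : \bar R := Vrem p alpha (H - n) d w.

Definition opt_bets (R : realType) (D : finType) (p : D -> D -> R -> R) (alpha : R)
  (H : nat) (d : D) (w : R) (n : nat) : set R :=
  [set b : R | 0 <= b <= 1 / 2 /\
     Qrem p alpha (H - n.+1) d w b = Vstar p alpha H d w n].

From HB Require Import structures.
From mathcomp Require Import all_boot all_order all_algebra.
From mathcomp Require Import all_classical all_reals all_analysis.
From mathcomp Require Import lra.
Import Order.TTheory GRing.Theory Num.Theory.
Local Open Scope ring_scope.
Local Open Scope classical_set_scope.

(* CRRA utility is affinely homogeneous: u1 (c w) = k_c u1 w + r_c with k_c > 0
   (k_c = c^alpha, r_c = 0 for alpha <> 0; k_c = 1, r_c = ln c for log utility).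
   Since the transition weights sum to one, expectations commute with such an
   affine map, and so does the supremum over bets; by backward induction every
   value V_m(d, .) and every continuation value Q_m(d, ., b) inherits the same
   homogeneity.  Rescaling the wealth thus transforms the Bellman objective by
   a strictly increasing map independent of b, which leaves its maximizers
   unchanged. *)

Section PositiveAffineMaps.
Context {R : realType}.
Local Open Scope ereal_scope.

Definition eaff (k r : R) (x : \bar R) : \bar R := k%:E * x + r%:E.

Lemma gt0_muleDr (k : R) (x y : \bar R) : (0 < k)%R ->
  k%:E * (x + y) = k%:E * x + k%:E * y.
Proof.
move=> k_gt0; have [xy|] := boolP (x +? y); first exact: muleDr.
have k_pos : 0 < k%:E by rewrite lte_fin.
case: x => [x| |]; case: y => [y| |] => //= _.
- by rewrite addeNy gt0_muleNy // addeNy.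
- by rewrite addNye gt0_muleNy // addNye.
Qed.

Lemma le_eaff (k r : R) : (0 < k)%R -> {mono eaff k r : x y / x <= y}.
Proof. by move=> k_gt0 x y; rewrite /eaff leeD2rE // lee_pmul2l // lte_fin. Qed.

Lemma eaff_inj (k r : R) : (0 < k)%R -> injective (eaff k r).
Proof.
move=> k_gt0 x y exy; apply/eqP.
by rewrite eq_le -(le_eaff _ r k_gt0 x) -(le_eaff _ r k_gt0 y) exy lexx.
Qed.

Lemma eaffM (q k r : R) (x : \bar R) :
  q%:E * eaff k r x = eaff k (q * r) (q%:E * x).
Proof. by rewrite /eaff muleDr ?fin_num_adde_defl // muleCA EFinM. Qed.

Lemma eaffD (k r s : R) (x y : \bar R) : (0 < k)%R ->
  eaff k r x + eaff k s y = eaff k (r + s) (x + y).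
Proof. by move=> k_gt0; rewrite /eaff addeACA gt0_muleDr // EFinD. Qed.

Lemma sume_eaff (I : Type) (s : seq I) (P : pred I) (k : R) (r : I -> R)
    (F : I -> \bar R) : (0 < k)%R ->
  \sum_(i <- s | P i) eaff k (r i) (F i) =
  eaff k (\sum_(i <- s | P i) r i) (\sum_(i <- s | P i) F i).
Proof.
move=> k_gt0; elim/big_rec3: _ => [|i y a b _ ->]; last exact: eaffD.
by rewrite /eaff mule0 add0e.
Qed.

Lemma ereal_sup_addr (X : set (\bar R)) (r : R) :
  ereal_sup [set x + r%:E | x in X] = ereal_sup X + r%:E.
Proof.
gen have sup_le : r X / ereal_sup [set x + r%:E | x in X] <= ereal_sup X + r%:E.
  apply: ge_ereal_sup => _ [x Xx <-].
  by rewrite leeD2r //; apply: ereal_sup_ubound.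
apply/eqP; rewrite eq_le sup_le /= -leeBrDr //.
rewrite (le_trans _ (sup_le (- r)%R _)) // image_comp /= EFinN.
by under eq_imagel do rewrite /= addeK //; rewrite image_id.
Qed.

Lemma ereal_sup_eaff (k r : R) (X : set (\bar R)) : (0 < k)%R ->
  ereal_sup (eaff k r @` X) = eaff k r (ereal_sup X).
Proof.
move=> k_gt0; rewrite /eaff -ereal_sup_pZl // -ereal_sup_addr.
by rewrite [in RHS]image_comp.
Qed.

End PositiveAffineMaps.

Section CRRAUtility.
Context {R : realType} (alpha : R).

Definition u1_slope (c : R) : R := if alpha == 0 then 1 else c `^ alpha.
Definition u1_shift (c : R) : R := if alpha == 0 then ln c else 0.

Lemma u1_slope_gt0 (c : R) : 0 < c -> 0 < u1_slope c.
Proof. by move=> c_gt0; rewrite /u1_slope; case: ifP => // _; rewrite powR_gt0. Qed.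

Lemma u1M (c w : R) : 0 < c -> 0 <= w ->
  u1 alpha (c * w) = eaff (u1_slope c) (u1_shift c) (u1 alpha w).
Proof.
move=> c_gt0 w_ge0; rewrite /u1 /eaff /u1_slope /u1_shift; case: ifP => _.
  rewrite pmulr_rgt0 // mul1e; case: ifP => [w_gt0|_]; last by rewrite addNye.
  by rewrite lnM ?posrE // EFinD addeC.
by rewrite adde0 -EFinM powRM ?(ltW c_gt0) // mulrA.
Qed.

End CRRAUtility.

Lemma returns_ge (R : realType) (x : R) : x \in returns R -> -2 <= x.
Proof.
have : all (fun x : R => -2 <= x) (returns R).
  by rewrite /=; repeat (apply/andP; split) => //; lra.
by move/allP => x_ge /x_ge.
Qed.

Lemma wealth_step_ge0 (R : realType) (w b x : R) :
  0 <= w -> 0 <= b <= 1 / 2 -> x \in returns R -> 0 <= w * (1 + b * x).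
Proof.
by move=> w_ge0 /andP[b_ge0 b_le] /returns_ge x_ge; apply: mulr_ge0 => //; nra.
Qed.

Section WealthScaling.
Context {R : realType} {D : finType} {p : D -> D -> R -> R} (alpha : R) {c : R}.
Hypothesis p_sum1 : forall d, \sum_(d' : D) \sum_(x <- returns R) p d d' x = 1.
Hypothesis c_gt0 : 0 < c.

Let k := u1_slope alpha c.
Let r := u1_shift alpha c.
Let k_gt0 : 0 < k. Proof. exact: u1_slope_gt0. Qed.

Lemma Qrem_scale m :
    (forall d w, 0 <= w ->
      Vrem p alpha m d (c * w) = eaff k r (Vrem p alpha m d w)) ->
  forall d w b, 0 <= w -> 0 <= b <= 1 / 2 ->
    Qrem p alpha m d (c * w) b = eaff k r (Qrem p alpha m d w b).
Proof.
move=> Vm_scale d w b w_ge0 b01.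
have term_scale d' x : x \in returns R ->
    ((p d d' x)%:E * Vrem p alpha m d' (c * w * (1 + b * x)) =
     eaff k (p d d' x * r) ((p d d' x)%:E * Vrem p alpha m d' (w * (1 + b * x))))%E.
  by move=> x_ret; rewrite -mulrA Vm_scale ?wealth_step_ge0 // eaffM.
rewrite /Qrem.
under eq_bigr => d' _ do rewrite (eq_big_seq _ (term_scale d')) sume_eaff //.
rewrite sume_eaff //; congr (eaff k _ _).
under eq_bigr => d' _ do rewrite -mulr_suml.
by rewrite -mulr_suml p_sum1 mul1r.
Qed.

Lemma Vrem_scale m d w : 0 <= w ->
  Vrem p alpha m d (c * w) = eaff k r (Vrem p alpha m d w).
Proof.
elim: m d w => [|m IH] d w w_ge0 /=; first exact: u1M.
rewrite -ereal_sup_eaff // image_comp; congr ereal_sup.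
by apply: eq_imagel => b b01 /=; apply: Qrem_scale.
Qed.

End WealthScaling.

Theorem theorem1 (R : realType) (D : finType) (p : D -> D -> R -> R)
  (alpha : R) (H : nat)
  (p_ge0 : forall d d' x, 0 <= p d d' x)
  (p_sum1 : forall d, \sum_(d' : D) \sum_(x <- returns R) p d d' x = 1)
  (alpha_ge0 : 0 <= alpha) :
  forall (d : D) (n : nat) (w w' : R), (n < H)%N -> 0 < w -> 0 < w' ->
    opt_bets p alpha H d w n = opt_bets p alpha H d w' n.
Proof.
move=> d n w w' _ w_gt0 w'_gt0.
pose c := w' / w.
have c_gt0 : 0 < c by rewrite divr_gt0.
have -> : w' = c * w by rewrite /c divfK // gt_eqF.
have Q_scale :=
  Qrem_scale alpha p_sum1 c_gt0 _ (Vrem_scale alpha p_sum1 c_gt0 (H - n.+1)) d.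
have V_scale := Vrem_scale alpha p_sum1 c_gt0 (H - n) d.
have w_ge0 := ltW w_gt0.
rewrite /opt_bets /Vstar; apply/seteqP; split=> b [b01 b_opt]; split=> //.
  by rewrite Q_scale // V_scale // b_opt.
by move: b_opt; rewrite Q_scale // V_scale //; apply: eaff_inj; apply: u1_slope_gt0.
Qed.
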